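(* Let $a=p^\gamma$ with $p$ an odd prime and $\gamma\ge1$; write $\phi(a)=2^m d$ with $d$ odd (so $m\ge1$), let $G=(\mathbb{Z}/a\mathbb{Z})^*$ and let $H$ be the maximal subgroup of $G$ of odd order. Let $n$ be a positive integer with $\gcd(n,a)=1$. Let $\mathcal{P}$ be the sequence of prime factors of $n$ counted with multiplicity, let $\mathcal{T}$ be the subsequence of those primes $r$ in $\mathcal{P}$ with $r\bmod a\notin H$, and let $t$ be the length of $\mathcal{T}$. Suppose that the set of residues modulo $a$ of the elements of $\mathcal{P}$ contains $H$. (i) If $t\ge 2^{m-1}$, then $n\notin\mathcal{E}^*_a$. (ii) Fix a primitive root $g$ modulo $p^\gamma$. If $t=2^{m-1}-1$, then $n\in\mathcal{E}^*_a$ if and only if there exists an odd integer $e$ such that every prime $r$ in $\mathcal{T}$ satisfies $r\equiv g^{e'}\pmod{p^\gamma}$ for some integer $e'$ with $e'\equiv e$ or $e'\equiv -e\pmod{2^m}$.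
   Context: For a positive integer $n$, let $R(n;a)$ be the number of pairs $(x,y)$ of positive integers with $\frac{a}{n}=\frac1x+\frac1y$, and $\mathcal{E}^*_a=\{n\in\mathbb{N}:R(n;a)=0,\ \gcd(n,a)=1\}$. *)

From HB Require Import structures.
From mathcomp Require Import all_boot all_order all_algebra all_fingroup all_solvable.
Set Implicit Arguments. Unset Strict Implicit. Unset Printing Implicit Defensive.
Import GRing.Theory.

(* a/n = 1/x + 1/y  <=>  a*x*y = n*(x+y)  (x, y, n > 0).
   R(n;a) = 0 iff there is no such pair of positive integers. *)
Definition has_rep (a n : nat) : Prop :=
  exists x y : nat, [/\ 0 < x, 0 < y & a * x * y = n * (x + y)].

Definition in_Estar (a n : nat) : Prop :=
  [/\ 0 < n, ~ has_rep a n & coprime n a].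

Definition Gunits (a : nat) : {set {unit 'Z_a}} := [set: {unit 'Z_a}].
Definition Hodd (a : nat) : {set {unit 'Z_a}} := pcore (2)^' (Gunits a).

Definition res_in_H (a r : nat) : bool :=
  [exists u in Hodd a, val u == (r%:R : 'Z_a)%R].

Definition prime_factors_mult (n : nat) : seq nat :=
  flatten [seq nseq pe.2 pe.1 | pe <- prime_decomp n].

Definition Tseq (a n : nat) : seq nat :=
  [seq r <- prime_factors_mult n | ~~ res_in_H a r].

Definition primitive_root_mod (a g : nat) : Prop :=
  coprime g a /\ forall k, 0 < k < totient a -> g ^ k %% a <> 1 %% a.

From mathcomp Require Import all_boot all_order all_algebra all_fingroup all_solvable.
From mathcomp Require Import zify ring.
Set Implicit Arguments. Unset Strict Implicit. Unset Printing Implicit Defensive.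
Import GRing.Theory.
Local Open Scope ring_scope.

(* Since gcd(n, a) = 1, a/n = 1/x + 1/y is solvable iff there are u, v > 0 with
   u v | n and a | u + v.  Writing the residue of each prime factor r of n as
   g^(L r) for a primitive root g, such a pair is a choice of signs
   e_r in {-1, 0, 1} (over the prime factors with multiplicity) with
   g^(sum e_r L r) = -1, i.e. sum e_r L r = phi(a)/2 (mod phi(a)).  The primes with
   residue in H have L r = 0 (mod 2^m) and, as they cover H, can absorb any
   correction divisible by 2^m; so n lies in E*_a iff no signed sum of the
   exponents L r, r in T, is 2^(m-1) modulo 2^m.  Pairing up odd entries and
   halving shows that 2^(m-1) integers not divisible by 2^m always have such a
   signed sum, and that 2^(m-1) - 1 of them avoid it only if they are all +-e
   modulo 2^m for a fixed odd e. *)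

(** * Signed subset sums *)

Inductive signed_sum : seq int -> int -> Prop :=
  | ssum_nil : signed_sum [::] 0
  | ssum_skip x s z : signed_sum s z -> signed_sum (x :: s) z
  | ssum_add x s z : signed_sum s z -> signed_sum (x :: s) (z + x)
  | ssum_sub x s z : signed_sum s z -> signed_sum (x :: s) (z - x).

Lemma signed_sum_consP x s z : signed_sum (x :: s) z ->
  exists2 z0, signed_sum s z0 & [\/ z = z0, z = z0 + x | z = z0 - x].
Proof.
move E : (x :: s) => t Ht; case: Ht E => [|y u w H|y u w H|y u w H] // [-> ->];
  exists w => //; [exact: Or31 | exact: Or32 | exact: Or33].
Qed.

Lemma signed_sum0 s : signed_sum s 0.
Proof. by elim: s => [|x s IH]; [apply: ssum_nil | apply: ssum_skip]. Qed.

Lemma signed_sum_mem x s : x \in s -> signed_sum s x.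
Proof.
elim: s => [|y s IH] //; rewrite inE => /predU1P [->|/IH]; last exact: ssum_skip.
by have := ssum_add y (signed_sum0 s); rewrite add0r.
Qed.

Lemma signed_sum_cat s1 s2 z1 z2 :
  signed_sum s1 z1 -> signed_sum s2 z2 -> signed_sum (s1 ++ s2) (z1 + z2).
Proof.
move=> H1 H2; elim: H1 => [|x s z _ IH|x s z _ IH|x s z _ IH] /=.
- by rewrite add0r.
- exact: ssum_skip.
- by rewrite addrAC; apply: ssum_add.
- by rewrite addrAC; apply: ssum_sub.
Qed.

Lemma signed_sum_catP s1 s2 z : signed_sum (s1 ++ s2) z ->
  exists z1 z2, [/\ signed_sum s1 z1, signed_sum s2 z2 & z = z1 + z2].
Proof.
elim: s1 z => [|x s1 IH] z /=.
  by exists 0, z; split; rewrite ?add0r //; apply: ssum_nil.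
case/signed_sum_consP=> z0 /IH [z1 [z2 [H1 H2 ->]]] [] ->.
- by exists z1, z2; split=> //; apply: ssum_skip.
- by exists (z1 + x), z2; split; [apply: ssum_add | | rewrite addrAC].
- by exists (z1 - x), z2; split; [apply: ssum_sub | | rewrite addrAC].
Qed.

Lemma signed_sum_catC s1 s2 z : signed_sum (s1 ++ s2) z -> signed_sum (s2 ++ s1) z.
Proof.
by case/signed_sum_catP=> z1 [z2 [H1 H2 ->]]; rewrite addrC; apply: signed_sum_cat.
Qed.

Lemma signed_sum_perm s t z : perm_eq s t -> signed_sum s z -> signed_sum t z.
Proof.
elim: s t z => [|x s IH] t z; first by rewrite perm_sym => /perm_nilP ->.
rewrite perm_sym => /perm_consP [i [u [Et Eu]]] /signed_sum_consP [z0 /IH H Ez].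
rewrite -(cat_take_drop i t); apply: signed_sum_catC; rewrite -/(seq.rot i t) Et.
have Hu : signed_sum u z0 by apply: H; rewrite perm_sym.
by case: Ez => ->; [apply: ssum_skip | apply: ssum_add | apply: ssum_sub].
Qed.

Lemma signed_sum_map_mulr c s z :
  signed_sum s z -> signed_sum [seq x * c | x <- s] (z * c).
Proof.
elim=> [|x s' z' _ IH|x s' z' _ IH|x s' z' _ IH] /=.
- by rewrite mul0r; apply: ssum_nil.
- exact: ssum_skip.
- by rewrite mulrDl; apply: ssum_add.
- by rewrite mulrBl; apply: ssum_sub.
Qed.

Lemma signed_sum_dvd (D : int) (s : seq int) z :
  {in s, forall x, (D %| x)%Z} -> signed_sum s z -> (D %| z)%Z.
Proof.
move=> Ds H; elim: H Ds => [|x s' z' _ IH|x s' z' _ IH|x s' z' _ IH] Ds //;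
  have Hx := Ds x (mem_head _ _);
  have /IH Hz : {in s', forall y, (D %| y)%Z} by move=> y Hy; apply/Ds/mem_behead.
- exact: Hz.
- exact: rpredD.
- exact: rpredB.
Qed.

Lemma signed_sum_consN x s z : signed_sum (x :: s) z -> signed_sum (- x :: s) z.
Proof.
case/signed_sum_consP=> z0 H [] ->; first exact: ssum_skip.
  by have := ssum_sub (- x) H; rewrite opprK.
by have := ssum_add (- x) H.
Qed.

Lemma signed_sum_consD x y s z :
  signed_sum (x + y :: s) z -> signed_sum [:: x, y & s] z.
Proof.
case/signed_sum_consP=> z0 H [] ->; first by do 2!apply: ssum_skip.
  by rewrite [x + y]addrC addrA; apply: ssum_add; apply: ssum_add.
by rewrite opprD addrA addrAC; apply: ssum_sub; apply: ssum_sub.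
Qed.

Lemma signed_sum_consS x s t z :
  (forall w, signed_sum s w -> signed_sum t w) ->
  signed_sum (x :: s) z -> signed_sum (x :: t) z.
Proof.
move=> st /signed_sum_consP [z0 /st H] [] ->;
  [exact: ssum_skip | exact: ssum_add | exact: ssum_sub].
Qed.

(* For odd x and y exactly one of x + y and x - y is not divisible by 4. *)
Definition pair_sum (x y : int) : int := x + (if (4 %| x + y)%Z then - y else y).

Fixpoint pair_sums (s : seq int) : seq int :=
  if s is x :: y :: s' then pair_sum x y :: pair_sums s' else [::].

Lemma signed_sum_pair_sums s z : signed_sum (pair_sums s) z -> signed_sum s z.
Proof.
have [n] := ubnP (size s); elim: n s z => // n IHn [|x [|y s]] z //= le_s.
  exact: ssum_skip.
have /IHn IHs : (size s < n)%N by lia.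
move/(signed_sum_consS IHs); rewrite /pair_sum; case: ifP => _ /signed_sum_consD //.
by apply: signed_sum_consS => w /signed_sum_consN; rewrite opprK.
Qed.

Lemma size_pair_sums s : size (pair_sums s) = (size s)./2.
Proof.
have [n] := ubnP (size s); elim: n s => // n IHn [|x [|y s]] //= le_s.
by rewrite IHn //; lia.
Qed.

Lemma pair_sums_mod4 (s : seq int) : {in s, forall x, ~~ (2 %| x)%Z} ->
  {in pair_sums s, forall x, (2 %| x)%Z && ~~ (4 %| x)%Z}.
Proof.
have [n] := ubnP (size s); elim: n s => // n IHn [|x [|y s]] //= /ltnSE le_s odd_s z.
have [ox oy] : ~~ (2 %| x)%Z /\ ~~ (2 %| y)%Z by rewrite !odd_s ?inE ?eqxx ?orbT.
rewrite inE => /predU1P [->|]; last first.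
  by apply: IHn => [|w sw]; [exact: ltnW | rewrite odd_s // !inE sw !orbT].
by rewrite /pair_sum; case: ifPn; move: ox oy; clear; lia.
Qed.

Definition even_reduce (s : seq int) : seq int :=
  filter (dvdz 2) s ++ pair_sums (filter (predC (dvdz 2)) s).

Lemma signed_sum_even_reduce s z : signed_sum (even_reduce s) z -> signed_sum s z.
Proof.
case/signed_sum_catP=> z1 [z2 [H1 /signed_sum_pair_sums H2 ->]].
apply: signed_sum_perm (signed_sum_cat H1 H2).
by rewrite perm_filterC.
Qed.

Lemma size_even_reduce s :
  (size s + count (dvdz 2) s <= (size (even_reduce s)).*2.+1)%N.
Proof.
rewrite size_cat size_pair_sums !size_filter -(count_predC (dvdz 2) s).
set e := count _ s; set o := count _ s; lia.
Qed.

Lemma even_reduce_even k (s : seq int) : {in s, forall x, ~~ (2 ^+ k.+2 %| x)%Z} ->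
  {in even_reduce s, forall x, (2 %| x)%Z && ~~ (2 ^+ k.+2 %| x)%Z}.
Proof.
move=> ndvd_s x; rewrite mem_cat mem_filter.
case/orP=> [/andP [ex /ndvd_s nx] | ]; first by apply/andP.
have odd_s : {in filter (predC (dvdz 2)) s, forall y, ~~ (2 %| y)%Z}.
  by move=> y; rewrite mem_filter => /andP [].
move/(pair_sums_mod4 odd_s)=> /andP [ex ndvd4]; apply/andP; split=> //.
by apply: contra ndvd4; apply: dvdz_trans; rewrite !exprS mulrA dvdz_mulr.
Qed.

(** * Signed sums modulo powers of two *)

Definition hits_pow2 (k : nat) (s : seq int) : Prop :=
  exists2 z, signed_sum s z & (2 ^+ k.+1 %| z - 2 ^+ k)%Z.

Lemma hits_pow2_halve k s c :
  (forall z, signed_sum c z -> signed_sum s z) -> {in c, forall x, (2 %| x)%Z} ->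
  hits_pow2 k [seq (x %/ 2)%Z | x <- c] -> hits_pow2 k.+1 s.
Proof.
move=> cs even_c [w /(signed_sum_map_mulr 2)]; rewrite -map_comp.
have -> : [seq (x %/ 2)%Z * 2 | x <- c] = c.
  by rewrite -[RHS]map_id; apply/eq_in_map => x /even_c /divzK.
move=> /cs Hw dvd_w; exists (w * 2) => //.
by rewrite [2 ^+ k.+1]exprSr -mulrBl [2 ^+ k.+2]exprSr; apply: dvdz_mul.
Qed.

Lemma halfz_ndvd k x : (2 %| x)%Z -> ~~ (2 ^+ k.+2 %| x)%Z -> ~~ (2 ^+ k.+1 %| x %/ 2)%Z.
Proof. by move/divzK=> {1}<-; apply: contra; rewrite [2 ^+ k.+2]exprSr dvdz_mul2r. Qed.

(* Counting the even entries twice is what makes the size bound survive halving. *)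
Lemma hits_pow2_succ k (s : seq int) :
  (forall t : seq int, {in t, forall x, ~~ (2 ^+ k.+1 %| x)%Z} -> (2 ^ k <= size t)%N ->
     hits_pow2 k t) ->
  {in s, forall x, ~~ (2 ^+ k.+2 %| x)%Z} ->
  (2 ^ k.+1 <= size s + count (dvdz 2) s)%N -> hits_pow2 k.+1 s.
Proof.
move=> IHk ndvd_s le_s; have even_s := even_reduce_even ndvd_s.
apply: (hits_pow2_halve (c := even_reduce s)) => [z|x /even_s /andP [] //|].
  exact: signed_sum_even_reduce.
apply: IHk => [x /mapP [y /even_s /andP [ey ny] ->]|]; first exact: halfz_ndvd.
by rewrite size_map; have := size_even_reduce s; rewrite expnS in le_s; lia.
Qed.

Lemma hits_pow2_size k (s : seq int) : {in s, forall x, ~~ (2 ^+ k.+1 %| x)%Z} ->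
  (2 ^ k <= size s)%N -> hits_pow2 k s.
Proof.
elim: k s => [|k IHk] s ndvd_s le_s; last by apply: hits_pow2_succ => //; lia.
case: s ndvd_s le_s => [|x s] // ndvd_s _; exists x; first exact: signed_sum_mem (mem_head x s).
by have := ndvd_s x (mem_head x s); rewrite expr1 expr0; lia.
Qed.

Lemma not_hits_pow2_odd k (s : seq int) : {in s, forall x, ~~ (2 ^+ k.+2 %| x)%Z} ->
  (2 ^ k.+1 <= (size s).+1)%N -> ~ hits_pow2 k.+1 s -> {in s, forall x, ~~ (2 %| x)%Z}.
Proof.
move=> ndvd_s le_s no_hit x sx; apply/negP=> ex; apply/no_hit/hits_pow2_succ => //.
  exact: hits_pow2_size.
have : has (dvdz 2) s by apply/hasP; exists x.
by rewrite has_count; lia.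
Qed.

Lemma signed_sum_congr_pm (D e : int) (s : seq int) z :
  {in s, forall x, (D %| x - e)%Z || (D %| x + e)%Z} -> signed_sum s z ->
  exists2 j : int, (`|j| <= size s)%N & (D %| z - j * e)%Z.
Proof.
move=> pm_s H; elim: H pm_s => [|x t w _ IH|x t w _ IH|x t w _ IH] pm_s.
- by exists 0; rewrite // mul0r subr0.
all: have /IH [j le_j Dj] : {in t, forall y, (D %| y - e)%Z || (D %| y + e)%Z}
       by move=> y ty; apply/pm_s/mem_behead.
all: have /orP [Dx|Dx] := pm_s x (mem_head x t).
- by exists j => //=; lia.
- by exists j => //=; lia.
- exists (j + 1); first by rewrite /=; lia.
  rewrite (_ : w + x - (j + 1) * e = (w - j * e) + (x - e)); last by ring.
  exact: rpredD.
- exists (j - 1); first by rewrite /=; lia.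
  rewrite (_ : w + x - (j - 1) * e = (w - j * e) + (x + e)); last by ring.
  exact: rpredD.
- exists (j - 1); first by rewrite /=; lia.
  rewrite (_ : w - x - (j - 1) * e = (w - j * e) - (x - e)); last by ring.
  exact: rpredB.
- exists (j + 1); first by rewrite /=; lia.
  rewrite (_ : w - x - (j + 1) * e = (w - j * e) - (x + e)); last by ring.
  exact: rpredB.
Qed.

Lemma pm_not_hits_pow2 k e (s : seq int) : ~~ (2 %| e)%Z ->
  {in s, forall x, (2 ^+ k.+1 %| x - e)%Z || (2 ^+ k.+1 %| x + e)%Z} ->
  (size s < 2 ^ k)%N -> ~ hits_pow2 k s.
Proof.
move=> odd_e pm_s lt_s [z /(signed_sum_congr_pm pm_s) [j le_j Dj] Dz].
have Dje : (2 ^+ k.+1 %| j * e - 2 ^+ k)%Z.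
  have -> : j * e - 2 ^+ k = (z - 2 ^+ k) - (z - j * e) by ring.
  exact: rpredB.
have dvd_j : (2 ^ k %| `|j|)%N.
  have : (2 ^+ k %| j * e)%Z.
    have -> : j * e = (j * e - 2 ^+ k) + 2 ^+ k by ring.
    by rewrite rpredD // (dvdz_trans _ Dje) // exprSr dvdz_mulr.
  rewrite dvdzE abszM abszX Gauss_dvdl // coprimeXl // coprime2n.
  by rewrite dvdzE dvdn2 negbK in odd_e.
have j0 : j = 0.
  apply/eqP; rewrite -absz_eq0; apply: contraTT dvd_j; rewrite -lt0n => j_gt0.
  by rewrite gtnNdvd //; apply: leq_ltn_trans lt_s.
move: Dje; rewrite j0 mul0r sub0r rpredN dvdzE !abszX /= => /dvdn_leq.
by rewrite expnS expn_gt0 => /(_ isT); have := expn_gt0 2 k; lia.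
Qed.

Lemma signed_sum_consD_pm x y y' s z : y' = y \/ y' = - y ->
  signed_sum (x + y' :: s) z -> signed_sum [:: x, y & s] z.
Proof.
case=> -> /signed_sum_consD //.
by apply: signed_sum_consS => w /signed_sum_consN; rewrite opprK.
Qed.

Lemma odd_pair_dvd4 k a x : ~~ (2 %| a)%Z -> ~~ (2 %| x)%Z ->
  ~~ (2 ^+ k %| x - a)%Z -> ~~ (2 ^+ k %| x + a)%Z ->
  exists y, [/\ y = x \/ y = - x, (4 %| a + y)%Z & ~~ (2 ^+ k %| a + y)%Z].
Proof.
move=> odd_a odd_x nDm nDp; have [D4|nD4] := boolP (4 %| a + x)%Z.
  by exists x; split; [left | | rewrite addrC].
exists (- x); split; [by right | move: nD4 odd_a odd_x; lia |].
by rewrite -opprB rpredN.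
Qed.

Lemma halfz_even x : (4 %| x)%Z -> (2 %| x %/ 2)%Z.
Proof.
move=> D4; have D2 : (2 %| x)%Z by apply: dvdz_trans D4; apply/dvdzP; exists 2.
by rewrite -(dvdz_mul2r (p := 2)) // divzK.
Qed.

Lemma not_hits_pow2_pair k a x t : ~~ (2 %| a)%Z -> ~~ (2 %| x)%Z ->
  {in t, forall y, ~~ (2 ^+ k.+3 %| y)%Z} -> (2 ^ k.+2 <= (size t).+3)%N ->
  ~ hits_pow2 k.+2 [:: a, x & t] -> (2 ^+ k.+3 %| x - a)%Z || (2 ^+ k.+3 %| x + a)%Z.
Proof.
move=> odd_a odd_x ndvd_t le_t no_hit; apply/negPn/negP => /norP [nDm nDp].
(* Merging x into a (with 4 | a +- x) yields a halved list without a hit whose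
   head is even, against [not_hits_pow2_odd]. *)
have even_t := even_reduce_even ndvd_t.
have [y [Ey D4 nD]] := odd_pair_dvd4 odd_a odd_x nDm nDp.
set c := a + y :: even_reduce t.
have sums_c z : signed_sum c z -> signed_sum [:: a, x & t] z.
  by move/(signed_sum_consS (@signed_sum_even_reduce t))/(signed_sum_consD_pm Ey).
have even_c : {in c, forall w, (2 %| w)%Z}.
  move=> w; rewrite inE => /predU1P [->|/even_t /andP [] //].
  by apply: dvdz_trans D4; apply/dvdzP; exists 2.
set h := [seq (w %/ 2)%Z | w <- c].
have ndvd_h : {in h, forall w, ~~ (2 ^+ k.+2 %| w)%Z}.
  move=> w /mapP [v]; rewrite inE => /predU1P [-> ->|/even_t /andP [ev nv] ->].
    by apply: halfz_ndvd => //; apply: even_c (mem_head _ _).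
  exact: halfz_ndvd.
have le_h : (2 ^ k.+1 <= (size h).+1)%N.
  have := size_even_reduce t; move: le_t; rewrite /h /c /= size_map !expnS.
  by set X := (2 ^ k)%N; set C := count _ _; set E := size _; lia.
have no_hit_h : ~ hits_pow2 k.+1 h by move/(hits_pow2_halve sums_c even_c).
by have := not_hits_pow2_odd ndvd_h le_h no_hit_h (mem_head _ _); rewrite halfz_even.
Qed.

Lemma not_hits_pow2_pm k (s : seq int) : {in s, forall x, ~~ (2 ^+ k.+2 %| x)%Z} ->
  (2 ^ k.+1 <= (size s).+1)%N -> ~ hits_pow2 k.+1 s ->
  exists2 e, ~~ (2 %| e)%Z &
    {in s, forall x, (2 ^+ k.+2 %| x - e)%Z || (2 ^+ k.+2 %| x + e)%Z}.
Proof.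
move=> ndvd_s le_s no_hit; have odd_s := not_hits_pow2_odd ndvd_s le_s no_hit.
case: s ndvd_s le_s no_hit odd_s => [|a s] ndvd_s le_s no_hit odd_s.
  by move: le_s; rewrite /= expnS; have := expn_gt0 2 k; lia.
have odd_a := odd_s a (mem_head a s).
exists a => // x ax; have odd_x := odd_s x ax.
have [-> | x_neq_a] := eqVneq x a; first by rewrite subrr dvdz0.
case: k ndvd_s le_s no_hit => [|k] ndvd_s le_s no_hit.
  by rewrite expr2; move: odd_a odd_x; lia.
have sx : x \in s by move: ax; rewrite inE (negbTE x_neq_a).
apply: (not_hits_pow2_pair (t := rem x s)) => //.
- by move=> y /mem_rem sy; apply/ndvd_s/mem_behead.
- by move: le_s; rewrite /= size_rem //; case: (s) sx.
- case=> z /(signed_sum_perm (t := a :: s)) Hz Dz; apply: no_hit; exists z => //.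
  by apply: Hz; rewrite perm_cons perm_sym perm_to_rem.
Qed.

(** * Egyptian fractions and divisor pairs *)

Lemma has_rep_of_dvd a n u v : (0 < a)%N -> (0 < n)%N -> (0 < u)%N -> (0 < v)%N ->
  (u %| n)%N -> (v %| n)%N -> (a %| u + v)%N -> has_rep a n.
Proof.
move=> a_gt0 n_gt0 u_gt0 v_gt0 /dvdnP [n1 En1] /dvdnP [n2 En2] /dvdnP [w Ew].
have w_gt0 : (0 < w)%N by nia.
have [n1_gt0 n2_gt0] : (0 < n1)%N /\ (0 < n2)%N by split; nia.
by exists (n1 * w)%N, (n2 * w)%N; split; nia.
Qed.

Lemma dvd_of_has_rep a n : coprime n a -> has_rep a n ->
  exists u v, [/\ 0 < u, 0 < v, u * v %| n & a %| u + v]%N.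
Proof.
move=> cop_na [x [y [x_gt0 y_gt0 Exy]]].
set g := gcdn x y; have g_gt0 : (0 < g)%N by rewrite gcdn_gt0 x_gt0.
have [x' Ex] : exists x', x = (x' * g)%N by apply/dvdnP; apply: dvdn_gcdl.
have [y' Ey] : exists y', y = (y' * g)%N by apply/dvdnP; apply: dvdn_gcdr.
have cop_xy : coprime x' y'.
  have : g = (gcdn x' y' * g)%N by rewrite muln_gcdl -Ex -Ey.
  by rewrite /coprime => Eg; apply/eqP; nia.
have [x'_gt0 y'_gt0] : (0 < x')%N /\ (0 < y')%N by split; nia.
have Exy' : (a * g * (x' * y') = n * (x' + y'))%N by nia.
have cop_sum : coprime (x' * y') (x' + y').
  by rewrite coprimeMl /coprime gcdnDl gcdnDr (gcdnC y') (eqP cop_xy).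
have dvd_n : (x' * y' %| n)%N by rewrite -(Gauss_dvdl n cop_sum) -Exy' dvdn_mull.
exists x', y'; split => //; have [k Ek] := dvdnP dvd_n.
have cop_ak : coprime a k by rewrite coprime_sym (coprime_dvdl _ cop_na) // Ek dvdn_mulr.
have Eag : (a * g = k * (x' + y'))%N by nia.
by rewrite -(Gauss_dvdr _ cop_ak) -Eag dvdn_mulr.
Qed.

Lemma prod_prime_factors_mult n : (0 < n)%N -> \prod_(r <- prime_factors_mult n) r = n.
Proof.
move=> n_gt0; rewrite {2}(prod_prime_decomp n_gt0) big_flatten /= big_map.
by apply: eq_bigr => pe _; rewrite big_nseq iter_muln_1.
Qed.

Lemma mem_prime_factors_mult n r :
  r \in prime_factors_mult n -> prime r /\ (r %| n)%N.
Proof.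
case/flattenP=> s /mapP [[p e] pe_n ->] /nseqP [/= -> _].
have [p_pr e_gt0 pe_dvd] := mem_prime_decomp pe_n; split => //.
by apply: dvdn_trans pe_dvd; rewrite -{1}(expn1 p) dvdn_exp2l.
Qed.

Section SignedProducts.

Variables (R : comUnitRingType) (x : R) (K : nat -> int).
Hypothesis x_unit : x \is a GRing.unit.

Lemma dvd_prod_signed_sum (s : seq nat) u v : all prime s ->
  {in s, forall r, r%:R = x ^ K r} -> (u * v %| \prod_(r <- s) r)%N ->
  exists2 z, signed_sum (map K s) z & u%:R = v%:R * x ^ z.
Proof.
elim: s u v => [|r s IH] u v /=.
  rewrite big_nil dvdn1 muln_eq1 => _ _ /andP [/eqP -> /eqP ->].
  by exists 0; [apply: ssum_nil | rewrite expr0z mulr1].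
case/andP=> r_pr s_pr xK; rewrite big_cons.
have {}IH u' v' : (u' * v' %| \prod_(r <- s) r)%N ->
    exists2 z, signed_sum (map K s) z & u'%:R = v'%:R * x ^ z.
  by apply: IH => // r' sr'; apply: xK; rewrite inE sr' orbT.
have xKr := xK r (mem_head r s).
have [/dvdnP [u' ->]|r_u] := boolP (r %| u)%N.
  rewrite (_ : u' * r * v = r * (u' * v))%N; last by ring.
  rewrite dvdn_pmul2l ?prime_gt0 // => /IH [z Hz Eu].
  by exists (z + K r); [apply: ssum_add | rewrite natrM Eu xKr exprzDr //; ring].
have [/dvdnP [v' ->]|r_v] := boolP (r %| v)%N.
  rewrite (_ : u * (v' * r) = r * (u * v'))%N; last by ring.
  rewrite dvdn_pmul2l ?prime_gt0 // => /IH [z Hz Eu].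
  exists (z - K r); first exact: ssum_sub.
  by rewrite natrM Eu xKr -mulrA -exprzDr // addrCA subrr addr0.
have cop : coprime (u * v) r by rewrite coprime_sym prime_coprime // Euclid_dvdM // negb_or r_u.
by rewrite Gauss_dvdr // => /IH [z Hz Eu]; exists z => //; apply: ssum_skip.
Qed.

Lemma signed_sum_dvd_prod (s : seq nat) z :
  {in s, forall r, r%:R = x ^ K r} -> signed_sum (map K s) z ->
  exists u v, (u * v %| \prod_(r <- s) r)%N /\ u%:R = v%:R * x ^ z.
Proof.
elim: s z => [|r s IH] z xK /=.
  by move E : [::] => t Ht; case: Ht E => // _; exists 1%N, 1%N; rewrite expr0z mulr1.
have {}IH z' : signed_sum (map K s) z' ->
    exists u v, (u * v %| \prod_(r <- s) r)%N /\ u%:R = v%:R * x ^ z'.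
  by apply: IH => r' sr'; apply: xK; rewrite inE sr' orbT.
have xKr := xK r (mem_head r s); rewrite big_cons.
case/signed_sum_consP=> z0 /IH [u [v [dvd_uv Euv]]] [] ->.
- by exists u, v; split=> //; apply: dvdn_mull.
- exists (r * u)%N, v; split; first by rewrite -mulnA dvdn_mul.
  by rewrite natrM Euv xKr exprzDr //; ring.
- exists u, (r * v)%N; split; first by rewrite mulnCA dvdn_mul.
  by rewrite natrM Euv xKr mulrAC -exprzDr // addrCA subrr addr0 mulrC.
Qed.

End SignedProducts.

(** * Primitive roots *)

Lemma eqZp_nat a x y : (1 < a)%N -> ((x%:R : 'Z_a) = y%:R) <-> x = y %[mod a].
Proof.
move=> a_gt1; split => [E | E]; first by rewrite -!(val_Zp_nat a_gt1) E.
by apply: val_inj; rewrite /= !(val_Zp_nat a_gt1).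
Qed.

Lemma unit_Zp_eq1 a (u : {unit 'Z_a}) : (u == 1)%g = (val u == 1).
Proof. by rewrite -(inj_eq val_inj) FinRing.val_unit1. Qed.

Section PrimitiveRoot.

Variables a g : nat.
Hypotheses (a_gt1 : (1 < a)%N) (g_prim : primitive_root_mod a g).

Local Notation gz := (g%:R : 'Z_a).

Let totient_gt0 : (0 < totient a)%N.
Proof. by rewrite totient_gt0; lia. Qed.

Lemma primroot_unit : gz \is a GRing.unit.
Proof. by case: g_prim => cop_ga _; rewrite unitZpE // coprime_sym. Qed.

Lemma primroot_expn_totient : gz ^+ totient a = 1.
Proof.
case: g_prim => cop_ga _; rewrite -natrX -[1]/(1%:R : 'Z_a); apply/eqZp_nat => //.
exact: Euler_exp_totient.
Qed.

Lemma primroot_expn_mod k : gz ^+ k = gz ^+ (k %% totient a).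
Proof.
by rewrite {1}(divn_eq k (totient a)) exprD mulnC exprM primroot_expn_totient expr1n mul1r.
Qed.

Lemma primroot_expn_eq1 k : (gz ^+ k == 1) = (totient a %| k)%N.
Proof.
rewrite primroot_expn_mod /dvdn; case: (posnP (k %% totient a)) => [-> | k_gt0].
  by rewrite expr0 eqxx.
apply/negbTE/eqP => E; case: g_prim => _ /(_ (k %% totient a)%N); apply.
  by rewrite k_gt0 ltn_pmod.
by apply/eqZp_nat => //; rewrite natrX E.
Qed.

Lemma primroot_expz_mod z : gz ^ z = gz ^+ `|(z %% totient a)%Z|%N.
Proof.
rewrite {1}(divz_eq z (totient a)) exprzDr ?primroot_unit // (mulrC (z %/ _)%Z).
rewrite -exprz_exp -exprnP primroot_expn_totient exp1rz mul1r exprnP gez0_abs //.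
by rewrite modz_ge0 // -lt0n.
Qed.

Lemma primroot_expz_eq1 z : (gz ^ z == 1) = (totient a %| z)%Z.
Proof.
rewrite primroot_expz_mod primroot_expn_eq1.
have lt_mod : (`|(z %% totient a)%Z| < totient a)%N.
  have := ltz_pmod z (_ : 0 < (totient a)%:Z); rewrite ltz_nat => /(_ totient_gt0).
  have := modz_ge0 z (_ : (totient a)%:Z != 0); rewrite -lt0n => /(_ totient_gt0).
  lia.
apply/idP/dvdz_mod0P => [dvd_mod | ->] //; apply/eqP; rewrite -absz_eq0.
by apply: contraTT dvd_mod; rewrite -lt0n => mod_gt0; rewrite gtnNdvd.
Qed.

Lemma primroot_expz_eq z1 z2 : (gz ^ z1 == gz ^ z2) = (totient a %| z1 - z2)%Z.
Proof.
rewrite -primroot_expz_eq1.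
have -> : gz ^ z1 = gz ^ (z1 - z2) * gz ^ z2 by rewrite -exprzDr ?primroot_unit // subrK.
by rewrite -{2}[gz ^ z2]mul1r (inj_eq (mulIr (unitrXz z2 primroot_unit))).
Qed.

Lemma primroot_order : #[FinRing.Unit primroot_unit]%g = totient a.
Proof.
have dvd_order k : (#[FinRing.Unit primroot_unit]%g %| k)%N = (totient a %| k)%N.
  by rewrite order_dvdn unit_Zp_eq1 FinRing.val_unitX /= primroot_expn_eq1.
by apply/eqP; rewrite eqn_dvd dvd_order dvdnn -dvd_order dvdnn.
Qed.

Lemma primroot_generates x : x \is a GRing.unit -> exists k, x = gz ^+ k.
Proof.
move=> x_unit; set w := FinRing.Unit primroot_unit.
have gen_w : <[w]>%g = [set: {unit 'Z_a}].
  apply/eqP; rewrite eqEcard subsetT /= -orderE primroot_order.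
  by rewrite -[[set: _]]/(units_Zp a) card_units_Zp //; lia.
have : FinRing.Unit x_unit \in <[w]>%g by rewrite gen_w inE.
case/cycleP => k Ek; exists k.
by rewrite -[x]/(val (FinRing.Unit x_unit)) Ek FinRing.val_unitX.
Qed.

Lemma primroot_expn_half : (2 < a)%N -> (2 %| totient a)%N ->
  gz ^+ (totient a %/ 2) = -1.
Proof.
move=> a_gt2 even_phi; have [k Ek] := primroot_generates (unitrN1 _).
have N1_neq1 : (-1 : 'Z_a) != 1.
  apply/eqP => E; have : (2%:R : 'Z_a) = 0%:R by rewrite mulr2n -{1}E addNr.
  by move/(eqZp_nat _ _ a_gt1); rewrite mod0n modn_small.
have := divnK even_phi; set h := (totient a %/ 2)%N => Eh.
have : (totient a %| k * 2)%N.
  by rewrite -primroot_expn_eq1 exprM -Ek expr2 mulrNN mulr1.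
rewrite -{1}Eh dvdn_pmul2r // => /dvdnP [j Ej].
have Ejh : (j * h = totient a * (j %/ 2) + j %% 2 * h)%N.
  by rewrite -Eh {1}(divn_eq j 2); ring.
move: N1_neq1; rewrite Ek Ej Ejh exprD exprM primroot_expn_totient expr1n mul1r.
by case: (odd j) (modn2 j) => ->; rewrite ?mul0n ?mul1n ?expr0 ?eqxx.
Qed.

Lemma primroot_expz_eqN1 z : (2 < a)%N -> (2 %| totient a)%N ->
  (gz ^ z == -1) = (totient a %| z - (totient a %/ 2)%:Z)%Z.
Proof. by move=> a_gt2 even_phi; rewrite -primroot_expz_eq -exprnP primroot_expn_half. Qed.

Lemma Hodd_primroot m d (u : {unit 'Z_a}) k : totient a = (2 ^ m * d)%N -> odd d ->
  val u = gz ^+ k -> (u \in Hodd a) = (2 ^ m %| k)%N.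
Proof.
move=> Ephi odd_d Eu; have d_gt0 : (0 < d)%N by case: (d) odd_d.
rewrite /Hodd /Gunits (mem_normal_Hall (nilpotent_pcore_Hall _ _) (pcore_normal _ _)).
- have dvd_order n : (#[u]%g %| n)%N = (totient a %| k * n)%N.
    by rewrite order_dvdn unit_Zp_eq1 FinRing.val_unitX Eu -exprM primroot_expn_eq1.
  rewrite /p_elt p'natE // -[RHS](dvdn_pmul2r d_gt0) -Ephi -dvd_order.
  apply/idP/idP => [odd_u | dvd_d]; last first.
    by apply/negP => /dvdn_trans/(_ dvd_d); rewrite dvdn2 odd_d.
  have : (#[u]%g %| 2 ^ m * d)%N by rewrite dvd_order -Ephi dvdn_mull.
  by rewrite Gauss_dvdr // coprimeXr // coprimen2 -[odd _]negbK -dvdn2.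
- exact: abelian_nil (units_Zp_abelian a).
- by rewrite inE.
Qed.

(* Junk value [totient a] when [r] is not a unit modulo [a]. *)
Definition dlog r : nat := find (fun k => gz ^+ k == r%:R) (iota 0 (totient a)).

Lemma dlogP r : coprime r a -> gz ^+ dlog r = r%:R.
Proof.
move=> cop_ra; have r_unit : (r%:R : 'Z_a) \is a GRing.unit by rewrite unitZpE // coprime_sym.
have [k Ek] := primroot_generates r_unit.
have has_k : has (fun k => gz ^+ k == r%:R) (iota 0 (totient a)).
  apply/hasP; exists (k %% totient a)%N; first by rewrite mem_iota add0n ltn_pmod.
  by rewrite -primroot_expn_mod Ek.
have := nth_find 0%N has_k; rewrite /dlog nth_iota ?add0n; first by move/eqP.
by move: has_k; rewrite has_find size_iota.
Qed.

End PrimitiveRoot.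

Lemma units_Zp_odd_pfactor_cyclic p k : prime p -> odd p -> (0 < k)%N ->
  cyclic (units_Zp (p ^ k)).
Proof.
move=> p_pr odd_p k_gt0; set q := (p ^ k)%N.
have q_gt1 : (1 < q)%N by rewrite -(expn0 p) ltn_exp2l ?prime_gt1.
pose x : 'Z_q := Zp1.
have ox : #[x]%g = q by rewrite order_Zp1 Zp_cast.
suff cycA : cyclic (Aut <[x]>%g) by rewrite -ox (isog_cyclic (Zp_unit_isog x)).
have p_x : (p.-group <[x]>)%g by rewrite pgroupE -orderE ox pnatX pnat_id.
have ntx : <[x]>%g != 1%g by rewrite -cardG_gt1 -orderE ox.
have [mu [_ [_ cycF _ _]]] := cyclic_pgroup_Aut_structure p_x (cycle_cyclic x) ntx.
case: ifP => _; first by move->.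
by case=> t [_ _ _]; rewrite odd_p => -[[]].
Qed.

Lemma primitive_root_of_cyclic a : (1 < a)%N -> cyclic (units_Zp a) ->
  exists g, primitive_root_mod a g.
Proof.
move=> a_gt1 /cyclicP [w Ew].
have ow : #[w]%g = totient a by rewrite orderE -Ew card_units_Zp //; lia.
have Eg : ((val (val w))%:R : 'Z_a) = val w by rewrite natr_Zp.
exists (val (val w)); split; first by rewrite coprime_sym -unitZpE // Eg (valP w).
move=> k /andP [k_gt0 lt_k] E.
have : (#[w]%g %| k)%N.
  rewrite order_dvdn unit_Zp_eq1 FinRing.val_unitX -Eg -natrX -[1]/(1%:R : 'Z_a).
  exact/eqP/eqZp_nat.
by rewrite ow => /(dvdn_leq k_gt0); lia.
Qed.

(** * The criterion *)

Section Criterion.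

Variables a g k d n : nat.
Hypotheses (a_gt2 : (2 < a)%N) (g_prim : primitive_root_mod a g).
Hypotheses (Ephi : totient a = (2 ^ k.+1 * d)%N) (odd_d : odd d).
Hypotheses (n_gt0 : (0 < n)%N) (cop_na : coprime n a).
Hypothesis cover_H : forall u : {unit 'Z_a}, u \in Hodd a ->
  exists2 r, r \in prime_factors_mult n & (r%:R : 'Z_a) = val u.

Let a_gt1 : (1 < a)%N. Proof. exact: ltnW. Qed.
Local Notation gz := (g%:R : 'Z_a).
Local Notation P := (prime_factors_mult n).
Local Notation L r := (dlog a g r)%:Z.

Let coprime_factor r : r \in P -> coprime r a.
Proof. by case/mem_prime_factors_mult=> _ /coprime_dvdl; apply. Qed.

Lemma dlog_prime_factor r : r \in P -> (r%:R : 'Z_a) = gz ^ L r.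
Proof. by move=> Pr; rewrite -exprnP dlogP // coprime_factor. Qed.

Lemma res_in_H_dlog r : r \in P -> res_in_H a r = (2 ^ k.+1 %| dlog a g r)%N.
Proof.
move=> Pr; have dlog_r := dlogP a_gt1 g_prim (coprime_factor Pr).
apply/existsP/idP => [[u /andP [uH /eqP Eu]] | dvd_r].
  by rewrite -(@Hodd_primroot a g a_gt1 g_prim k.+1 d u) // Eu dlog_r.
have r_unit : (r%:R : 'Z_a) \is a GRing.unit.
  by rewrite unitZpE // coprime_sym coprime_factor.
exists (FinRing.Unit r_unit); rewrite eqxx andbT.
by rewrite (@Hodd_primroot a g a_gt1 g_prim k.+1 d _ (dlog a g r)) //= dlog_r.
Qed.

Lemma has_rep_signed_dlog : has_rep a n <->
  exists2 z, signed_sum (map (fun r => L r) P) z & gz ^ z = -1.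
Proof.
have g_unit := primroot_unit a_gt1 g_prim.
have P_prime : all prime P by apply/allP => r /mem_prime_factors_mult [].
split => [/(dvd_of_has_rep cop_na) [u [v [u_gt0 v_gt0 dvd_uv dvd_a]]] | [z Hz Ez]].
  have dvd_prod : (u * v %| \prod_(r <- P) r)%N by rewrite prod_prime_factors_mult.
  have [z Hz Euv] := dvd_prod_signed_sum g_unit P_prime dlog_prime_factor dvd_prod.
  exists z => //; have v_unit : (v%:R : 'Z_a) \is a GRing.unit.
    rewrite unitZpE // coprime_sym; apply: coprime_dvdl cop_na.
    exact: dvdn_trans (dvdn_mull u (dvdnn v)) dvd_uv.
  apply: (mulrI v_unit); rewrite -Euv mulrN1; apply/eqP; rewrite -addr_eq0 -natrD.
  by apply/eqP/(eqZp_nat _ 0 a_gt1); rewrite mod0n; apply/eqP.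
have [u [v [dvd_uv Euv]]] := signed_sum_dvd_prod g_unit dlog_prime_factor Hz.
rewrite prod_prime_factors_mult // in dvd_uv.
have : (0 < u * v)%N by apply: dvdn_gt0 dvd_uv.
rewrite muln_gt0 => /andP [u_gt0 v_gt0].
apply: (has_rep_of_dvd _ n_gt0 u_gt0 v_gt0); first by lia.
- exact: dvdn_trans (dvdn_mulr v (dvdnn u)) dvd_uv.
- exact: dvdn_trans (dvdn_mull u (dvdnn v)) dvd_uv.
have : ((u + v)%:R : 'Z_a) = 0%:R by rewrite natrD Euv Ez mulrN1 addNr.
by move/(eqZp_nat _ _ a_gt1); rewrite mod0n => /eqP.
Qed.

Let dvd_totient : (2 ^+ k.+1 %| (totient a)%:Z)%Z.
Proof. by rewrite dvdzE abszX absz_nat Ephi dvdn_mulr. Qed.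

Let even_totient : (2 %| totient a)%N.
Proof. by rewrite Ephi expnS -mulnA dvdn_mulr. Qed.

Lemma dvd_half_totient : (2 ^+ k.+1 %| (totient a %/ 2)%:Z - 2 ^+ k)%Z.
Proof.
have -> : (totient a %/ 2)%:Z - 2 ^+ k = 2 ^+ k.+1 * d./2%:Z.
  rewrite Ephi expnS -mulnA mulKn // -{1}(odd_double_half d) odd_d add1n -muln2.
  by rewrite mulnS PoszD !PoszM -natz natrX -[Posz 2]/(2 : int) exprS; ring.
exact: dvdz_mulr.
Qed.

Lemma res_in_H_dlog_cover c : (2 ^+ k.+1 %| c)%Z ->
  exists2 r, r \in filter (res_in_H a) P & (totient a %| L r - c)%Z.
Proof.
move=> dvd_c; have g_unit := primroot_unit a_gt1 g_prim.
set u := FinRing.Unit (unitrXz c g_unit).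
have u_H : u \in Hodd a.
  rewrite (@Hodd_primroot a g a_gt1 g_prim k.+1 d u `|(c %% totient a)%Z|%N) //.
    have -> : (c %% totient a)%Z = c - (c %/ totient a)%Z * (totient a)%:Z.
      by rewrite {2}(divz_eq c (totient a)) addrC addKr.
    have : (2 ^+ k.+1 %| c - (c %/ totient a)%Z * (totient a)%:Z)%Z.
      by rewrite rpredB // dvdz_mull.
    by rewrite dvdzE abszX.
  exact: primroot_expz_mod.
have [r Pr Er] := cover_H u_H.
exists r; last by rewrite -(primroot_expz_eq a_gt1 g_prim) -dlog_prime_factor // Er.
by rewrite mem_filter Pr andbT; apply/existsP; exists u; rewrite u_H Er eqxx.
Qed.

Lemma Tseq_dlog_ndvd : {in map (fun r => L r) (Tseq a n), forall x, ~~ (2 ^+ k.+1 %| x)%Z}.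
Proof.
move=> x /mapP [r]; rewrite mem_filter => /andP [nH Pr] ->.
by rewrite dvdzE abszX absz_nat -res_in_H_dlog.
Qed.

Lemma has_rep_hits_pow2 : has_rep a n <-> hits_pow2 k (map (fun r => L r) (Tseq a n)).
Proof.
have g_unit := primroot_unit a_gt1 g_prim.
have eqN1 z : (gz ^ z == -1) = (totient a %| z - (totient a %/ 2)%:Z)%Z.
  exact: primroot_expz_eqN1.
set H := filter (res_in_H a) P.
have perm_P : perm_eq (map (fun r => L r) P) (map (fun r => L r) (Tseq a n ++ H)).
  by apply: perm_map; rewrite perm_sym perm_catC; apply/permPl/perm_filterC.
have dvd_H : {in map (fun r => L r) H, forall x, (2 ^+ k.+1 %| x)%Z}.
  move=> x /mapP [r]; rewrite mem_filter => /andP [rH Pr] ->.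
  by rewrite dvdzE abszX absz_nat -res_in_H_dlog.
rewrite has_rep_signed_dlog; split => [[z Hz /eqP Ez] | [z Hz dvd_z]].
  move: Hz => /(signed_sum_perm perm_P); rewrite map_cat.
  case/signed_sum_catP=> z1 [z2 [Hz1 /(signed_sum_dvd dvd_H) dvd_z2 Ez12]].
  exists z1 => //; rewrite eqN1 in Ez.
  have -> : z1 - 2 ^+ k = (z - (totient a %/ 2)%:Z) - z2 + ((totient a %/ 2)%:Z - 2 ^+ k).
    by rewrite Ez12; ring.
  apply: rpredD; last exact: dvd_half_totient.
  by apply: rpredB => //; apply: dvdz_trans dvd_totient Ez.
have [r Hr dvd_r] : exists2 r, r \in H & (totient a %| L r - ((totient a %/ 2)%:Z - z))%Z.
  apply: res_in_H_dlog_cover.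
  have -> : (totient a %/ 2)%:Z - z = ((totient a %/ 2)%:Z - 2 ^+ k) - (z - 2 ^+ k) by ring.
  by rewrite rpredB ?dvd_half_totient.
exists (z + L r).
  apply: (signed_sum_perm (s := map (fun r => L r) (Tseq a n ++ H))).
    by rewrite perm_sym.
  by rewrite map_cat; apply: signed_sum_cat Hz _; apply/signed_sum_mem/map_f.
by apply/eqP; rewrite eqN1 (_ : z + L r - _ = L r - ((totient a %/ 2)%:Z - z)) //; ring.
Qed.

Lemma Tseq_dlog_congr_pm e :
  (forall r, r \in Tseq a n -> exists e' : int, (r%:R : 'Z_a) = gz ^ e' /\
     ((e' == e %[mod (2 ^ k.+1)%N])%Z || (e' == - e %[mod (2 ^ k.+1)%N])%Z)) <->
  {in map (fun r => L r) (Tseq a n),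
    forall x, (2 ^+ k.+1 %| x - e)%Z || (2 ^+ k.+1 %| x + e)%Z}.
Proof.
have E2 : ((2 ^ k.+1)%N : int) = 2 ^+ k.+1 by rewrite -natz natrX.
have Tseq_P r : r \in Tseq a n -> r \in P by rewrite mem_filter => /andP [].
split => [pm_T x /mapP [r Tr ->] | pm_T r Tr].
  have [e' [Er]] := pm_T r Tr; rewrite !eqz_mod_dvd E2 opprK.
  have dvd_r : (2 ^+ k.+1 %| L r - e')%Z.
    apply: dvdz_trans dvd_totient _.
    by rewrite -(primroot_expz_eq a_gt1 g_prim) -Er -dlog_prime_factor ?Tseq_P.
  rewrite (_ : L r - e = (L r - e') + (e' - e)); last by ring.
  rewrite (_ : L r + e = (L r - e') + (e' + e)); last by ring.
  by case/orP=> dvd_e; apply/orP; [left | right]; rewrite rpredD.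
exists (L r); split; first by rewrite dlog_prime_factor ?Tseq_P.
by rewrite !eqz_mod_dvd E2 opprK; apply: pm_T; apply: map_f.
Qed.

Lemma has_rep_of_size_Tseq : (2 ^ k <= size (Tseq a n))%N -> has_rep a n.
Proof.
move=> le_T; apply/has_rep_hits_pow2/hits_pow2_size; first exact: Tseq_dlog_ndvd.
by rewrite size_map.
Qed.

Lemma not_has_rep_congr_pm : size (Tseq a n) = (2 ^ k - 1)%N ->
  ~ has_rep a n <-> exists e : int, odd `|e|%N /\
    forall r, r \in Tseq a n -> exists e' : int, (r%:R : 'Z_a) = gz ^ e' /\
      ((e' == e %[mod (2 ^ k.+1)%N])%Z || (e' == - e %[mod (2 ^ k.+1)%N])%Z).
Proof.
move=> size_T; have odd_e e : odd `|e|%N = ~~ (2 %| e)%Z by rewrite dvdzE dvdn2 negbK.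
have ndvd_T := Tseq_dlog_ndvd; rewrite has_rep_hits_pow2.
split=> [no_hit | [e [odd_e' /Tseq_dlog_congr_pm pm_T]]]; last first.
  apply: (pm_not_hits_pow2 _ pm_T); first by rewrite -odd_e.
  by rewrite size_map size_T subn1 prednK ?expn_gt0 // ltnn.
have pm_iff := Tseq_dlog_congr_pm; move: pm_iff ndvd_T no_hit.
case: k size_T => [|k'] size_T pm_iff ndvd_T no_hit.
  by exists 1; split=> // r; move: size_T => /size0nil ->.
have [|e odd_e' pm_T] := not_hits_pow2_pm ndvd_T _ no_hit.
  by rewrite size_map size_T subn1 prednK ?expn_gt0.
by exists e; rewrite odd_e; split=> //; apply/pm_iff.
Qed.

End Criterion.

Lemma odd_pfactor_gt2 p k : prime p -> odd p -> (0 < k)%N -> (2 < p ^ k)%N.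
Proof.
move=> p_pr odd_p k_gt0; have p_gt2 : (2 < p)%N.
  by move: (prime_gt1 p_pr) odd_p; case: (p) => [|[|[|]]].
by apply: leq_trans p_gt2 _; rewrite -{1}(expn1 p); apply: leq_pexp2l; lia.
Qed.

Lemma totient_odd_pfactor_even p k : prime p -> odd p -> (0 < k)%N ->
  ~~ odd (totient (p ^ k)).
Proof.
move=> p_pr odd_p k_gt0; have even_p1 : ~~ odd p.-1 by move: odd_p; case: (p).
by rewrite totient_pfactor // oddM (negbTE even_p1).
Qed.

Unset Implicit Arguments.

Theorem lemma2p6 (p gam m d n : nat) :
  prime p -> odd p -> (0 < gam)%N ->
  totient (p ^ gam) = (2 ^ m * d)%N -> odd d ->
  (0 < n)%N -> coprime n (p ^ gam) ->
  (forall u : {unit 'Z_(p ^ gam)}, u \in Hodd (p ^ gam) ->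
     exists2 r, r \in prime_factors_mult n & (r%:R : 'Z_(p ^ gam)) = val u) ->
  ((2 ^ m.-1 <= size (Tseq (p ^ gam) n))%N -> ~ in_Estar (p ^ gam) n) /\
  (forall g : nat, primitive_root_mod (p ^ gam) g ->
     size (Tseq (p ^ gam) n) = (2 ^ m.-1 - 1)%N ->
     (in_Estar (p ^ gam) n <->
      exists e : int, odd `|e|%N /\
        forall r, r \in Tseq (p ^ gam) n ->
          exists e' : int,
            (r%:R : 'Z_(p ^ gam)) = (g%:R : 'Z_(p ^ gam)) ^ e' /\
            ((e' == e %[mod (2 ^ m)%N])%Z || (e' == - e %[mod (2 ^ m)%N])%Z))).
Proof.
move=> p_pr odd_p gam_gt0 Ephi odd_d n_gt0 cop_na cover_H.
have a_gt2 := odd_pfactor_gt2 p_pr odd_p gam_gt0.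
have [k Em] : exists k, m = k.+1.
  case: m Ephi => [|k] Ephi; last by exists k.
  by have := totient_odd_pfactor_even p_pr odd_p gam_gt0; rewrite Ephi mul1n odd_d.
subst m; rewrite /= in Ephi *.
have Estar : in_Estar (p ^ gam) n <-> ~ has_rep (p ^ gam) n by split=> [[] | ].
split.
  move=> le_T /Estar; apply.
  have [g g_prim] := primitive_root_of_cyclic (ltnW a_gt2)
    (units_Zp_odd_pfactor_cyclic p_pr odd_p gam_gt0).
  exact: (has_rep_of_size_Tseq a_gt2 g_prim Ephi odd_d n_gt0 cop_na cover_H).
move=> g g_prim size_T; rewrite Estar.
exact: (not_has_rep_congr_pm a_gt2 g_prim Ephi odd_d n_gt0 cop_na cover_H).
Qed.
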